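(* Let $c\in V$ and let $c=a+b$ be an $X2$-decomposition with $x_0=\|a\|_X$ and $y_0=\|b\|_Y$ (so $y_0=h^c_{YX}(x_0)$). Then: (1) $\int_0^{\|c\|_X} h^c_{YX}(x)\,dx=\tfrac12\|c\|_2^2$; (2) $\int_{x_0}^{\|c\|_X} h^c_{YX}(x)\,dx=\tfrac12\|b\|_2^2$; (3) the area of the region $\{(x,y): 0\le x\le \|c\|_X,\ y_0\le y\le h^c_{YX}(x)\}$ equals $\tfrac12\|a\|_2^2$; (4) $x_0y_0=\langle a,b\rangle$.
   Context: $V$ is a finite dimensional real vector space with a positive definite symmetric bilinear form $\langle\cdot,\cdot\rangle$ and $\|v\|_2=\sqrt{\langle v,v\rangle}$; $\|\cdot\|_X$ is a norm on $V$ with dual norm $\|v\|_Y=\max\{\langle v,w\rangle:\|w\|_X=1\}$. A decomposition $c=a+b$ is an $X2$-decomposition if for every decomposition $c=a'+b'$ we have $\|a'\|_X>\|a\|_X$, or $\|b'\|_2>\|b\|_2$, or $(\|a'\|_X,\|b'\|_2)=(\|a\|_X,\|b\|_2)$. For $x\in[0,\|c\|_X]$ let $\alpha^c_{2X}(x)$ be the unique $a\in V$ minimizing $\|c-a\|_2$ subject to $\|a\|_X\le x$, and define $h^c_{YX}(x)=\|c-\alpha^c_{2X}(x)\|_Y$ (the Pareto sub-frontier; $h^c_{YX}$ is a decreasing continuous function $[0,\|c\|_X]\to[0,\|c\|_Y]$, and for every $X2$-decomposition $c=a+b$ one has $a=\alpha^c_{2X}(\|a\|_X)$). *)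

From Stdlib Require Import Reals ClassicalEpsilon.
From mathcomp Require Import all_boot.
Set Implicit Arguments. Unset Strict Implicit. Unset Printing Implicit Defensive.
Open Scope R_scope.

(* V = R^n, a finite dimensional real inner product space (every such space is
   isometric to R^n with the standard dot product). *)
Definition Vec (n : nat) := 'I_n -> R.

Definition vadd n (u v : Vec n) : Vec n := fun i => u i + v i.
Definition vsub n (u v : Vec n) : Vec n := fun i => u i - v i.
Definition vscale n (r : R) (v : Vec n) : Vec n := fun i => r * v i.

Definition inner n (u v : Vec n) : R := \big[Rplus/0]_(i < n) (u i * v i).
Definition norm2 n (v : Vec n) : R := sqrt (inner v v).

Definition is_norm n (nX : Vec n -> R) : Prop :=
  (forall v, 0 <= nX v) /\
  (forall v, nX v = 0 -> v = (fun _ => 0)) /\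
  (forall r v, nX (vscale r v) = Rabs r * nX v) /\
  (forall u v, nX (vadd u v) <= nX u + nX v).

Definition is_dual_value n (nX : Vec n -> R) (v : Vec n) (y : R) : Prop :=
  (exists w, nX w = 1 /\ inner v w = y) /\
  (forall w, nX w = 1 -> inner v w <= y).
Definition dual_norm n (nX : Vec n -> R) (v : Vec n) : R :=
  epsilon (inhabits 0) (is_dual_value nX v).

Definition is_X2_decomp n (nX : Vec n -> R) (c a b : Vec n) : Prop :=
  c = vadd a b /\
  forall a' b', c = vadd a' b' ->
    nX a' > nX a \/ norm2 b' > norm2 b \/ (nX a' = nX a /\ norm2 b' = norm2 b).

Definition is_alpha n (nX : Vec n -> R) (c : Vec n) (x : R) (a : Vec n) : Prop :=
  nX a <= x /\ forall a', nX a' <= x -> norm2 (vsub c a) <= norm2 (vsub c a').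
Definition alpha2X n (nX : Vec n -> R) (c : Vec n) (x : R) : Vec n :=
  epsilon (inhabits (fun _ => 0)) (is_alpha nX c x).

Definition hYX n (nX : Vec n -> R) (c : Vec n) (x : R) : R :=
  dual_norm nX (vsub c (alpha2X nX c x)).

(* Write alpha x for the Euclidean projection of c onto the nX-ball of radius x, h x for the dual
   norm of the residual c - alpha x, and Phi x = |c - alpha x|^2 / 2.  The first-order condition
   of the projection gives <c - alpha x, alpha x> = x * h x and <c - alpha x, a'> <= x' * h x
   whenever nX a' <= x'; together with |alpha x - alpha x'|^2 >= 0 this yields
     (x' - x) h x' <= Phi x - Phi x' <= (x' - x) h x   for 0 <= x <= x'.
   So h decreases and its Riemann sums converge to the increments of Phi.  Since Phi 0 = |c|^2/2,
   Phi (nX c) = 0 and alpha (nX a) = a for an X2-decomposition, this gives (1) and (2); (4) is the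
   first-order identity at x0, and (3) is (1) minus (2) minus the rectangle x0 * y0.  The dual norm
   and the projection exist by compactness of bounded closed sets of R^n. *)

From Stdlib Require Import Reals Lra FunctionalExtensionality ClassicalEpsilon.
From Coquelicot Require Import Coquelicot.
From mathcomp Require Import all_boot Rstruct.
From mathcomp Require all_order all_algebra all_classical all_reals all_analysis Rstruct_topology.
Set Implicit Arguments. Unset Strict Implicit. Unset Printing Implicit Defensive.
Open Scope R_scope.

Lemma nonpos_of_le_small_multiples p q : 0 <= q ->
  (forall t, 0 < t -> t <= 1 -> p <= t * q) -> p <= 0.
Proof.
move=> q0 Hpq; case: (Rle_lt_dec p 0) => // p0.
have t0 : 0 < Rmin 1 (p / (q + 1)) by apply: Rmin_glb_lt; [lra | apply: Rdiv_lt_0_compat; lra].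
have := Hpq _ t0 (Rmin_l _ _); have := Rmin_r 1 (p / (q + 1)).
have : p / (q + 1) * q = p - p / (q + 1) by field; lra.
have : 0 < p / (q + 1) by apply: Rdiv_lt_0_compat; lra.
nra.
Qed.

Lemma Rabs_le0 x : Rabs x <= 0 -> x = 0.
Proof. by move=> x0; have := Rle_abs x; have := Rle_abs (- x); rewrite Rabs_Ropp; lra. Qed.

(* A discrete form of Phi' = -g on [lo, hi]. *)
Definition sandwich (g Phi : R -> R) (lo hi : R) : Prop :=
  forall x x', lo <= x -> x <= x' -> x' <= hi ->
    (x' - x) * g x' <= Phi x - Phi x' <= (x' - x) * g x.

Lemma pointed_subdiv_head_le_last ptd :
  pointed_subdiv ptd -> SF_h ptd <= seq.last (SF_h ptd) (SF_lx ptd).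
Proof.
elim/(@SF_cons_ind R): ptd => [x0|[x y] s IH] Hptd /=; first lra.
have := Hptd 0%nat; rewrite /SF_size /= => /(_ (Nat.lt_0_succ _)) /= Hxy.
have := IH (ptd_cons _ _ Hptd); simpl in *; lra.
Qed.

Section Sandwich.
Variables (g Phi : R -> R) (lo hi : R).
Hypothesis gPhi : sandwich g Phi lo hi.

Lemma sandwich_antitone x x' : lo <= x -> x <= x' -> x' <= hi -> g x' <= g x.
Proof.
move=> lox xx' x'hi; case: (Req_dec x x') => [<-|neq]; first lra.
have := gPhi lox xx' x'hi; nra.
Qed.

Lemma sandwich_cell x y x' : lo <= x -> x <= y <= x' -> x' <= hi ->
  Rabs ((x' - x) * g y - (Phi x - Phi x')) <= (x' - x) * (g x - g x').
Proof.
move=> lox [xy yx'] x'hi.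
have gy' : g x' <= g y by apply: sandwich_antitone; lra.
have gy : g y <= g x by apply: sandwich_antitone; lra.
have := gPhi lox (Rle_trans _ _ _ xy yx') x'hi.
by move=> S; apply: Rabs_le; split; nra.
Qed.

(* The error on each cell is at most mesh times the drop of g there, and the drops telescope. *)
Lemma Riemann_sum_sandwich d ptd : pointed_subdiv ptd ->
  lo <= SF_h ptd -> seq.last (SF_h ptd) (SF_lx ptd) <= hi -> seq_step (SF_lx ptd) <= d ->
  Rabs (Riemann_sum g ptd - (Phi (SF_h ptd) - Phi (seq.last (SF_h ptd) (SF_lx ptd))))
    <= d * (g (SF_h ptd) - g (seq.last (SF_h ptd) (SF_lx ptd))).
Proof.
elim/(@SF_cons_ind R): ptd => [x0|[x y] s IH] Hptd lox lasthi mesh.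
  rewrite /Riemann_sum /= !Rminus_diag Rabs_R0; lra.
rewrite Riemann_sum_cons.
have := Hptd 0%nat; rewrite /SF_size /= => /(_ (Nat.lt_0_succ _)) /= Hxy.
have Hs := ptd_cons _ _ Hptd.
have sL := pointed_subdiv_head_le_last Hs.
simpl in *.
set x1 := SF_h s in IH Hxy sL lasthi mesh *.
set L := seq.last x1 _ in IH sL lasthi mesh *.
have {}mesh : Rmax (Rabs (x1 - x)) (seq_step (SF_lx s)) <= d := mesh.
have mesh1 : x1 - x <= d.
  have := Rle_trans _ _ _ (Rmax_l _ _) mesh; rewrite Rabs_right; lra.
have cell := sandwich_cell lox Hxy (Rle_trans _ _ _ sL lasthi).
have lox1 : lo <= x1 by lra.
have IHs := IH Hs lox1 lasthi (Rle_trans _ _ _ (Rmax_r _ _) mesh).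
have gx1 : g L <= g x1 by apply: sandwich_antitone; lra.
have gx : g x1 <= g x by apply: sandwich_antitone; lra.
rewrite /plus /scal /= /mult /=.
have -> : (x1 - x) * g y + Riemann_sum g s - (Phi x - Phi L) =
  ((x1 - x) * g y - (Phi x - Phi x1)) + (Riemann_sum g s - (Phi x1 - Phi L)) by ring.
apply: Rle_trans (Rabs_triang _ _) _.
have : (x1 - x) * (g x - g x1) <= d * (g x - g x1) by apply: Rmult_le_compat_r; lra.
lra.
Qed.

Lemma sandwich_truncate x0 : lo <= x0 <= hi ->
  sandwich (fun x => Rmax (g x - g x0) 0) (fun x => Phi (Rmin x x0) + Rmin x x0 * g x0) lo hi.
Proof.
move=> [lox0 x0hi] x x' lox xx' x'hi /=.
case: (Rle_dec x' x0) => [x'x0 | /Rnot_le_lt x0x'].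
  have gx' : g x0 <= g x' by apply: sandwich_antitone; lra.
  have gx : g x0 <= g x by apply: sandwich_antitone; lra.
  rewrite !Rmin_left ?Rmax_left; try lra.
  have := gPhi lox xx' x'hi; lra.
have gx' : g x' <= g x0 by apply: sandwich_antitone; lra.
have -> : Rmin x' x0 = x0 by apply: Rmin_right; lra.
have -> : Rmax (g x' - g x0) 0 = 0 by apply: Rmax_right; lra.
case: (Rle_dec x0 x) => [x0x | /Rnot_le_lt xx0].
  have gx : g x <= g x0 by apply: sandwich_antitone; lra.
  rewrite Rmin_right ?Rmax_right; lra.
have gx : g x0 <= g x by apply: sandwich_antitone; lra.
rewrite Rmin_left ?Rmax_left; try lra.
have := gPhi lox (Rlt_le _ _ xx0) x0hi; nra.
Qed.

Lemma is_RInt_sandwich : lo <= hi -> is_RInt g lo hi (Phi lo - Phi hi).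
Proof.
move=> lohi P [eps Heps].
rewrite /filtermap /Riemann_fine /within /locally_dist.
case: (Req_dec lo hi) => [eq | neq].
  exists (mkposreal 1 Rlt_0_1) => ptd _ _; apply: Heps.
  rewrite eq !Rminus_diag sign_0 /ball /= /AbsRing_ball /abs /minus /plus /opp /= /scal /= /mult /=.
  match goal with |- Rabs ?e < _ => replace e with 0 by ring end.
  rewrite Rabs_R0; exact: cond_pos.
have gdrop : g hi <= g lo by apply: sandwich_antitone; lra.
have delta_pos : 0 < eps / (g lo - g hi + 1) by apply: Rdiv_lt_0_compat; [exact: cond_pos | lra].
exists (mkposreal _ delta_pos) => ptd mesh [Hptd [Hh Hl]]; rewrite /= in mesh.
rewrite Rmin_left in Hh; last lra.
rewrite Rmax_right in Hl; last lra.
rewrite sign_eq_1; last lra.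
apply: Heps.
have := @Riemann_sum_sandwich (seq_step (SF_lx ptd)) ptd Hptd.
rewrite Hl Hh => /(_ (Rle_refl _) (Rle_refl _) (Rle_refl _)).
rewrite /ball /= /AbsRing_ball /abs /minus /plus /opp /= /scal /= /mult /= Rmult_1_l => err.
apply: Rle_lt_trans err _.
have : eps / (g lo - g hi + 1) * (g lo - g hi + 1) = eps by field; lra.
have := seq_step_ge_0 (SF_lx ptd); have := cond_pos eps; nra.
Qed.

Lemma RiemannInt_sandwich :
  lo <= hi -> exists pr : Riemann_integrable g lo hi, RiemannInt pr = Phi lo - Phi hi.
Proof.
move=> lohi; have I := is_RInt_sandwich lohi.
exists (ex_RInt_Reals_0 _ _ _ (ex_intro _ _ I)).
by rewrite -RInt_Reals (is_RInt_unique _ _ _ _ I).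
Qed.

End Sandwich.

Definition vzero n : Vec n := fun _ => 0.
Arguments vzero {n}.

Definition basisv n (i : 'I_n) : Vec n := fun j => if j == i then 1 else 0.

Lemma Vec0_eq0 (v : Vec 0) : v = vzero.
Proof. by apply: functional_extensionality => -[]. Qed.

Ltac vext := apply: functional_extensionality => ?; cbv beta delta [vadd vsub vscale vzero]; ring.

Section InnerProduct.
Variable n : nat.
Implicit Types u v w : Vec n.

Lemma inner_sym u v : inner u v = inner v u.
Proof. by apply: eq_bigr => i _; rewrite Rmult_comm. Qed.

Lemma inner_addl u v w : inner (vadd u v) w = inner u w + inner v w.
Proof. by rewrite /inner -big_split; apply: eq_bigr => i _; rewrite /vadd Rmult_plus_distr_r. Qed.

Lemma inner_scalel r u v : inner (vscale r u) v = r * inner u v.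
Proof. by rewrite /inner big_distrr; apply: eq_bigr => i _; rewrite /vscale Rmult_assoc. Qed.

Lemma inner_subl u v w : inner (vsub u v) w = inner u w - inner v w.
Proof.
have -> : vsub u v = vadd u (vscale (-1) v) by vext.
rewrite inner_addl inner_scalel; ring.
Qed.

Lemma inner_addr u v w : inner w (vadd u v) = inner w u + inner w v.
Proof. by rewrite inner_sym inner_addl !(inner_sym w). Qed.

Lemma inner_subr u v w : inner w (vsub u v) = inner w u - inner w v.
Proof. by rewrite inner_sym inner_subl !(inner_sym w). Qed.

Lemma inner_scaler r u v : inner v (vscale r u) = r * inner v u.
Proof. by rewrite inner_sym inner_scalel inner_sym. Qed.

Lemma inner0r u : inner u vzero = 0.
Proof. by rewrite /inner big1 // => i _; rewrite /vzero Rmult_0_r. Qed.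

Lemma coord_sqr_le_inner u i : u i * u i <= inner u u.
Proof.
rewrite /inner (bigD1 i) //=; set rest := \big[Rplus/0]_(j | j != i) _.
have : 0 <= rest by apply: (big_ind (Rle 0)) => [|x y|j _]; [lra | lra | apply: Rle_0_sqr].
lra.
Qed.

Lemma inner_ge0 u : 0 <= inner u u.
Proof. by apply: (big_ind (Rle 0)) => [|x y|i _]; [lra | lra | apply: Rle_0_sqr]. Qed.

Lemma inner_eq0 u : inner u u = 0 -> u = vzero.
Proof.
move=> u0; apply: functional_extensionality => i.
have := coord_sqr_le_inner u i; have := Rle_0_sqr (u i); rewrite /Rsqr /vzero; nra.
Qed.

Lemma norm2_sq u : norm2 u ^ 2 = inner u u.
Proof. exact: pow2_sqrt (inner_ge0 u). Qed.

Lemma norm2_ge0 u : 0 <= norm2 u.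
Proof. exact: sqrt_pos. Qed.

Lemma norm2_vzero : norm2 (@vzero n) = 0.
Proof. by rewrite /norm2 inner0r sqrt_0. Qed.

Lemma norm2_le u v : norm2 u <= norm2 v <-> inner u u <= inner v v.
Proof.
split=> [|uv]; last exact: sqrt_le_1_alt.
rewrite -!norm2_sq; have := norm2_ge0 u; nra.
Qed.

Lemma coord_abs_le_norm2 u i : Rabs (u i) <= norm2 u.
Proof.
rewrite -(sqrt_Rsqr_abs (u i)); apply: sqrt_le_1_alt; exact: coord_sqr_le_inner.
Qed.

Lemma inner_basisv (i : 'I_n) : inner (basisv i) (basisv i) = 1.
Proof.
rewrite /inner (bigD1 i) //= big1 => [|j ji]; rewrite /basisv ?eqxx ?(negbTE ji); ring.
Qed.

End InnerProduct.

Definition contv n (F : Vec n -> R) : Prop :=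
  forall u eps, 0 < eps -> exists d, 0 < d /\
    forall v, (forall i, Rabs (u i - v i) < d) -> Rabs (F u - F v) < eps.

Section Continuity.
Variable n : nat.
Implicit Types F G : Vec n -> R.

Lemma contv_const k : contv (fun _ : Vec n => k).
Proof. by move=> u eps eps0; exists 1; split=> [|v _]; rewrite ?Rminus_diag ?Rabs_R0; lra. Qed.

Lemma contv_coord (i : 'I_n) : contv (fun v : Vec n => v i).
Proof. by move=> u eps eps0; exists eps; split=> // v; apply. Qed.

Lemma contv_add F G : contv F -> contv G -> contv (fun v => F v + G v).
Proof.
move=> cF cG u eps eps0.
have [dF [dF0 HF]] := cF u (eps / 2) ltac:(lra).
have [dG [dG0 HG]] := cG u (eps / 2) ltac:(lra).
exists (Rmin dF dG); split=> [|v uv]; first exact: Rmin_glb_lt.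
have := HF v (fun i => Rlt_le_trans _ _ _ (uv i) (Rmin_l _ _)).
have := HG v (fun i => Rlt_le_trans _ _ _ (uv i) (Rmin_r _ _)).
have := Rabs_triang (F u - F v) (G u - G v).
have -> : F u - F v + (G u - G v) = F u + G u - (F v + G v) by ring.
lra.
Qed.

Lemma contv_opp F : contv F -> contv (fun v => - F v).
Proof.
move=> cF u eps eps0; have [d [d0 HF]] := cF u eps eps0.
exists d; split=> // v uv; rewrite -Rabs_Ropp; have -> : - (- F u - - F v) = F u - F v by ring.
exact: HF.
Qed.

Lemma contv_abs F : contv F -> contv (fun v => Rabs (F v)).
Proof.
move=> cF u eps eps0; have [d [d0 HF]] := cF u eps eps0.
by exists d; split=> // v uv; apply: Rle_lt_trans (Rabs_triang_inv2 _ _) (HF v uv).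
Qed.

Lemma contv_mul F G : contv F -> contv G -> contv (fun v => F v * G v).
Proof.
move=> cF cG u eps eps0.
set A := Rabs (F u) + 1; set B := Rabs (G u) + 1.
have A0 : 0 < A by have := Rabs_pos (F u); rewrite /A; lra.
have B0 : 0 < B by have := Rabs_pos (G u); rewrite /B; lra.
set eF := eps / (2 * B); set eG := Rmin 1 (eps / (2 * A)).
have eF0 : 0 < eF by apply: Rdiv_lt_0_compat; lra.
have eG0 : 0 < eG by apply: Rmin_glb_lt; [lra | apply: Rdiv_lt_0_compat; lra].
have [dF [dF0 HF]] := cF u eF eF0.
have [dG [dG0 HG]] := cG u eG eG0.
exists (Rmin dF dG); split=> [|v uv]; first exact: Rmin_glb_lt.
have {}HF := HF v (fun i => Rlt_le_trans _ _ _ (uv i) (Rmin_l _ _)).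
have {}HG := HG v (fun i => Rlt_le_trans _ _ _ (uv i) (Rmin_r _ _)).
have eG1 : eG <= 1 := Rmin_l _ _.
have eGA : A * eG <= eps / 2.
  have : A * (eps / (2 * A)) = eps / 2 by field; lra.
  have := Rmin_r 1 (eps / (2 * A)); rewrite -/eG; nra.
have eFB : eF * B = eps / 2 by rewrite /eF; field; lra.
have Gv : Rabs (G v) <= B.
  have := Rabs_triang_inv (G v) (G u); rewrite Rabs_minus_sym /B; lra.
have -> : F u * G u - F v * G v = (F u - F v) * G v + F u * (G u - G v) by ring.
apply: Rle_lt_trans (Rabs_triang _ _) _; rewrite !Rabs_mult.
have := Rabs_pos (F u - F v); have := Rabs_pos (G v).
have := Rabs_pos (F u); have := Rabs_pos (G u - G v).
have : Rabs (F u) <= A by rewrite /A; lra.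
nra.
Qed.

Lemma contv_sum (F : 'I_n -> Vec n -> R) :
  (forall i, contv (F i)) -> contv (fun v => \big[Rplus/0]_(i < n) F i v).
Proof.
move=> cF; elim: (index_enum _) => [|i r IH].
  by under [fun v => _]functional_extensionality => v do rewrite big_nil; exact: contv_const.
by under [fun v => _]functional_extensionality => v do rewrite big_cons; exact: contv_add.
Qed.

Lemma contv_inner (f g : Vec n -> Vec n) :
  (forall i, contv (fun v => f v i)) -> (forall i, contv (fun v => g v i)) ->
  contv (fun v => inner (f v) (g v)).
Proof. by move=> cf cg; apply: contv_sum => i; exact: contv_mul. Qed.

End Continuity.

Section Norm.
Variables (n : nat) (nX : Vec n -> R).
Hypothesis HX : is_norm nX.
Implicit Types u v : Vec n.

Lemma nX_ge0 v : 0 <= nX v. Proof. by case: HX. Qed.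
Lemma nX_eq0 v : nX v = 0 -> v = vzero. Proof. by case: HX => _ [H _]; apply: H. Qed.
Lemma nX_scale r v : nX (vscale r v) = Rabs r * nX v. Proof. by case: HX => _ [_ [H _]]. Qed.
Lemma nX_triangle u v : nX (vadd u v) <= nX u + nX v. Proof. by case: HX => _ [_ [_ H]]. Qed.

Lemma nX_scale_pos r v : 0 <= r -> nX (vscale r v) = r * nX v.
Proof. by move=> r0; rewrite nX_scale Rabs_pos_eq. Qed.

Lemma nX0 : nX vzero = 0.
Proof.
have -> : @vzero n = vscale 0 vzero by vext.
by rewrite nX_scale Rabs_R0 Rmult_0_l.
Qed.

Lemma nX_gt0 v : v <> vzero -> 0 < nX v.
Proof. by move=> v0; case: (nX_ge0 v) => // /esym /nX_eq0. Qed.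

Lemma nX_sub_sym u v : nX (vsub u v) = nX (vsub v u).
Proof.
have -> : vsub u v = vscale (-1) (vsub v u) by vext.
by rewrite nX_scale Rabs_Ropp Rabs_R1 Rmult_1_l.
Qed.

Lemma nX_dist u v : Rabs (nX u - nX v) <= nX (vsub u v).
Proof.
have Hu : nX u <= nX v + nX (vsub u v).
  have {1}-> : u = vadd v (vsub u v) by vext.
  exact: nX_triangle.
have Hv : nX v <= nX u + nX (vsub v u).
  have {1}-> : v = vadd u (vsub v u) by vext.
  exact: nX_triangle.
by rewrite nX_sub_sym in Hv; apply: Rabs_le; lra.
Qed.

(* Expand u in the basis: nX u <= sum_i |u_i| nX(e_i). *)
Lemma nX_le_coord : exists K, 0 <= K /\
  forall u t, 0 <= t -> (forall i, Rabs (u i) <= t) -> nX u <= K * t.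
Proof.
set K := \big[Rplus/0]_(i < n) nX (basisv i).
exists K; split=> [|u t t0 ut].
  by apply: (big_ind (Rle 0)) => [|x y|i _]; [lra | lra | exact: nX_ge0].
pose part r : Vec n := fun j => \big[Rplus/0]_(i <- r) (u i * basisv i j).
have -> : u = part (index_enum 'I_n).
  apply: functional_extensionality => j; rewrite /part (bigD1 j) //= big1 => [|i ij].
    by rewrite /basisv eqxx; ring.
  by rewrite /basisv eq_sym (negbTE ij); ring.
rewrite /K Rmult_comm big_distrr /=; elim: (index_enum _) => [|i r IH].
  have -> : part [::] = vzero by apply: functional_extensionality => j; rewrite /part big_nil.
  by rewrite nX0 big_nil; lra.
have -> : part (i :: r) = vadd (vscale (u i) (basisv i)) (part r).
  by apply: functional_extensionality => j; rewrite /part big_cons.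
rewrite big_cons; apply: Rle_trans (nX_triangle _ _) _; rewrite nX_scale.
have := ut i; have := nX_ge0 (basisv i); nra.
Qed.

Lemma contv_nX : contv nX.
Proof.
have [K [K0 HK]] := nX_le_coord.
move=> u eps eps0; exists (eps / (K + 1)); split=> [|v uv].
  by apply: Rdiv_lt_0_compat; lra.
apply: Rle_lt_trans (nX_dist u v) _.
have d0 : 0 < eps / (K + 1) by apply: Rdiv_lt_0_compat; lra.
apply: Rle_lt_trans (HK _ _ (Rlt_le _ _ d0) (fun i => Rlt_le _ _ (uv i))) _.
have : K * (eps / (K + 1)) = eps - eps / (K + 1) by field; lra.
lra.
Qed.

End Norm.

Lemma X2_decompP n (nX : Vec n -> R) (c a b : Vec n) : is_norm nX ->
  is_X2_decomp nX c a b -> b = vsub c a /\ nX a <= nX c /\ is_alpha nX c (nX a) a.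
Proof.
move=> HX [cab abmin]; have bca : b = vsub c a by rewrite cab; vext.
split=> //; split.
  have : c = vadd c vzero by vext.
  by case/abmin => [|[|]]; rewrite ?norm2_vzero; have := norm2_ge0 b; lra.
split=> [|a' a'a]; first exact: Rle_refl.
have : c = vadd a' (vsub c a') by vext.
by case/abmin => [|[|]]; rewrite -bca; lra.
Qed.

Module Compactness.
Import all_order all_algebra all_classical all_reals all_analysis Rstruct_topology.
Import Order.TTheory GRing.Theory Num.Theory.
Local Open Scope classical_set_scope.
Local Open Scope ring_scope.

Lemma contv_attains_max n (F G : Vec n -> R) (M : R) v0 :
  Rle 0 M -> contv F -> contv G -> Rle (G v0) 0 ->
  (forall v, Rle (G v) 0 -> forall i, Rle (Rabs (v i)) M) ->
  exists v, Rle (G v) 0 /\ forall u, Rle (G u) 0 -> Rle (F u) (F v).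
Proof.
move=> M0 cF cG G0 bG.
pose tr (x : 'rV[R]_n) : Vec n := fun i => x ord0 i.
have trK u : tr (\row_i u i) = u by apply: boolp.funext => i; rewrite /tr mxE.
pose A := [set x : 'rV[R]_n | G (tr x) <= 0].
have ctr H : contv H -> continuous (fun x => H (tr x)).
  move=> cH x s /= /(nbhs_ballP (H (tr x))) [e /RltP e0 es].
  have [d [d0 Hd]] := cH (tr x) e e0.
  apply/nbhs_ballP; exists d; first exact/RltP.
  move=> y [_ xy]; apply: es; rewrite /ball /= -/(Rabs _); apply/RltP; apply: Hd => i.
  by have /RltP := xy ord0 i.
have [c cA cmax] : exists2 c, c \in A & forall t, t \in A -> F (tr t) <= F (tr c).
  apply: compact_EVT_max; last exact/continuous_subspaceT/ctr.
    by exists (\row_i v0 i); rewrite /A /= trK; apply/RleP.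
  apply: bounded_closed_compact.
    exists M; split; first by rewrite num_real.
    move=> r Mr x; rewrite /A /= => /RleP Gx; rewrite [X in X <= _]mx_normrE; apply/bigmax_leP; split.
      by apply: le_trans (ltW Mr); apply/RleP.
    case=> i1 j _ /=; rewrite (ord1 i1); apply: le_trans (ltW Mr); exact/RleP/(bG _ Gx j).
  have -> : A = (fun x => G (tr x)) @^-1` [set y | y <= 0] by [].
  by apply: preimage_closed; [move=> x _; exact: ctr | exact: closed_le].
exists (tr c); split; first by move: cA; rewrite inE => /RleP.
by move=> u Gu; rewrite -(trK u); apply/RleP/cmax; rewrite inE /A /= trK; apply/RleP.
Qed.

End Compactness.

Section NormedSpace.
Variables (n : nat) (nX : Vec n -> R).
Hypothesis HX : is_norm nX.
(* Only witnesses n > 0: in dimension 0 the nX-unit sphere is empty and dual_norm is a junk value. *)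
Variable i0 : 'I_n.
Implicit Types u v w : Vec n.

(* nX is bounded below on the Euclidean unit sphere, which is compact. *)
Lemma nX_ge_norm2 : exists m, 0 < m /\ forall w, m * norm2 w <= nX w.
Proof.
have cSphere : contv (fun w : Vec n => Rabs (inner w w - 1)).
  apply/contv_abs/contv_add; last exact: contv_const.
  by apply: contv_inner => i; exact: contv_coord.
have onSphere w : Rabs (inner w w - 1) <= 0 -> inner w w = 1.
  by move=> /Rabs_le0; lra.
have bSphere w : Rabs (inner w w - 1) <= 0 -> forall i, Rabs (w i) <= 1.
  move=> /onSphere w1 i; have := coord_abs_le_norm2 w i; by rewrite /norm2 w1 sqrt_1.
have e0 : Rabs (inner (basisv i0) (basisv i0) - 1) <= 0.
  by rewrite inner_basisv Rminus_diag Rabs_R0; lra.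
have [w [/onSphere w1 wmin]] := Compactness.contv_attains_max Rle_0_1
  (contv_opp (contv_nX HX)) cSphere e0 bSphere.
exists (nX w); split=> [|u].
  by apply: (nX_gt0 HX) => w0; move: w1; rewrite w0 inner0r; lra.
have [u0 | u0] := Req_dec (inner u u) 0.
  by rewrite /norm2 u0 sqrt_0 Rmult_0_r; exact: nX_ge0.
set s := norm2 u.
have s0 : 0 < s by apply: sqrt_lt_R0; have := inner_ge0 u; lra.
have ss : s * s = inner u u by apply: sqrt_sqrt; exact: inner_ge0.
have := wmin (vscale (/ s) u); rewrite (nX_scale_pos HX); last by apply/Rlt_le/Rinv_0_lt_compat.
rewrite inner_scalel inner_scaler -ss.
have -> : / s * (/ s * (s * s)) - 1 = 0 by field; lra.
rewrite Rabs_R0 => /(_ (Rle_refl 0)) wu.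
have : s * nX w <= s * (/ s * nX u) by apply: Rmult_le_compat_l; lra.
have -> : s * (/ s * nX u) = nX u by field; lra.
lra.
Qed.

Lemma nX_ball_bounded : exists m, 0 < m /\
  forall r w, nX w <= r -> forall i, Rabs (w i) <= r / m.
Proof.
have [m [m0 Hm]] := nX_ge_norm2.
exists m; split=> // r w wr i; apply: (Rmult_le_reg_l m) => //.
have -> : m * (r / m) = r by field; lra.
have := coord_abs_le_norm2 w i; have := Hm w; nra.
Qed.

Lemma dual_normP v : is_dual_value nX v (dual_norm nX v).
Proof.
apply: epsilon_spec.
have [m [m0 Hm]] := nX_ball_bounded.
have e0 : 0 < nX (basisv i0).
  by apply: (nX_gt0 HX) => e0; have := inner_basisv i0; rewrite e0 inner0r; lra.
set e := vscale (/ nX (basisv i0)) (basisv i0).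
have e1 : nX e = 1.
  rewrite /e (nX_scale_pos HX); last by apply/Rlt_le/Rinv_0_lt_compat.
  by field; lra.
have onSphere w : Rabs (nX w - 1) <= 0 -> nX w = 1 by move=> /Rabs_le0; lra.
have cSphere : contv (fun w => Rabs (nX w - 1)).
  by apply/contv_abs/contv_add; [exact: contv_nX | exact: contv_const].
have bSphere w : Rabs (nX w - 1) <= 0 -> forall i, Rabs (w i) <= 1 / m.
  by move=> /onSphere w1; apply: Hm; lra.
have cInner : contv (fun w => inner v w).
  by apply: contv_inner => i; [exact: contv_const | exact: contv_coord].
have eSphere : Rabs (nX e - 1) <= 0 by rewrite e1 Rminus_diag Rabs_R0; lra.
have m1 : 0 <= 1 / m by apply/Rlt_le/Rdiv_lt_0_compat; lra.
have [w [/onSphere w1 wmax]] := Compactness.contv_attains_max m1 cInner cSphere eSphere bSphere.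
exists (inner v w); split; first by exists w.
by move=> w' w'1; apply: wmax; rewrite w'1 Rminus_diag Rabs_R0; lra.
Qed.

Lemma dual_norm_attained v : exists w, nX w = 1 /\ inner v w = dual_norm nX v.
Proof. by case: (dual_normP v). Qed.

Lemma inner_le_dual v w : inner v w <= nX w * dual_norm nX v.
Proof.
have [w0 | w0] := Req_dec (nX w) 0.
  by rewrite w0 (nX_eq0 HX w0) inner0r; lra.
have wpos : 0 < nX w by have := nX_ge0 HX w; lra.
have [_ dmax] := dual_normP v.
have := dmax (vscale (/ nX w) w).
rewrite (nX_scale_pos HX); last by apply/Rlt_le/Rinv_0_lt_compat.
rewrite Rinv_l // inner_scaler => /(_ erefl) H.
have : nX w * (/ nX w * inner v w) <= nX w * dual_norm nX v by apply: Rmult_le_compat_l; lra.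
have -> : nX w * (/ nX w * inner v w) = inner v w by field.
done.
Qed.

Lemma dual_norm_ge0 v : 0 <= dual_norm nX v.
Proof.
have [w [w1 vw]] := dual_norm_attained v.
have := inner_le_dual v (vscale (-1) w).
by rewrite (nX_scale HX) inner_scaler w1 vw Rabs_Ropp Rabs_R1; lra.
Qed.

Lemma inner_le_ball_dual v w r : nX w <= r -> inner v w <= r * dual_norm nX v.
Proof.
move=> wr; apply: Rle_trans (inner_le_dual v w) _.
by apply: Rmult_le_compat_r => //; exact: dual_norm_ge0.
Qed.

Section Alpha.
Variable c : Vec n.

Lemma alpha_exists x : 0 <= x -> exists a, is_alpha nX c x a.
Proof.
move=> x0; have [m [m0 Hm]] := nX_ball_bounded.
have cBall : contv (fun a => nX a - x) by apply: contv_add; [exact: contv_nX | exact: contv_const].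
have cRes i : contv (fun a : Vec n => vsub c a i).
  by apply: contv_add; [exact: contv_const | exact/contv_opp/contv_coord].
have cDist : contv (fun a => - inner (vsub c a) (vsub c a)) by exact/contv_opp/contv_inner.
have bBall a : nX a - x <= 0 -> forall i, Rabs (a i) <= x / m by move=> ax; apply: Hm; lra.
have zBall : nX vzero - x <= 0 by rewrite (nX0 HX); lra.
have xm : 0 <= x / m by apply: Rmult_le_pos; [lra | apply/Rlt_le/Rinv_0_lt_compat].
have [a [ax amin]] := Compactness.contv_attains_max xm cDist cBall zBall bBall.
exists a; split=> [|a' a'x]; first lra.
by apply/norm2_le; have := amin a'; lra.
Qed.

Lemma alpha2XP x : 0 <= x -> is_alpha nX c x (alpha2X nX c x).
Proof. by move=> x0; apply: epsilon_spec; exact: alpha_exists. Qed.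

(* First-order condition along the segment from a to a', which stays in the nX-ball. *)
Lemma alpha_variational x a a' :
  is_alpha nX c x a -> nX a' <= x -> inner (vsub c a) (vsub a' a) <= 0.
Proof.
move=> [ax amin] a'x.
apply: (@nonpos_of_le_small_multiples _ (inner (vsub a' a) (vsub a' a) / 2)).
  by have := inner_ge0 (vsub a' a); lra.
move=> t t0 t1; set at_ := vadd (vscale (1 - t) a) (vscale t a').
have atx : nX at_ <= x.
  apply: Rle_trans (nX_triangle HX _ _) _.
  rewrite !(nX_scale_pos HX); try lra.
  by have := nX_ge0 HX a; have := nX_ge0 HX a'; nra.
have := proj1 (norm2_le _ _) (amin _ atx).
have -> : vsub c at_ = vsub (vsub c a) (vscale t (vsub a' a)) by rewrite /at_; vext.
move: (vsub c a) (vsub a' a) => b d.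
rewrite inner_subl !inner_subr !inner_scalel !inner_scaler (inner_sym d b).
nra.
Qed.

(* Complementary slackness: the nX-ball constraint is active against the residual. *)
Lemma alpha_inner x a : 0 <= x -> is_alpha nX c x a ->
  inner (vsub c a) a = x * dual_norm nX (vsub c a).
Proof.
move=> x0 aP; have [w [w1 bw]] := dual_norm_attained (vsub c a).
have := alpha_variational aP (a' := vscale x w).
rewrite (nX_scale_pos HX) // w1 Rmult_1_r inner_subr inner_scaler bw => /(_ (Rle_refl x)).
have := inner_le_ball_dual (vsub c a) (proj1 aP); lra.
Qed.

Lemma alpha_unique x a1 a2 : is_alpha nX c x a1 -> is_alpha nX c x a2 -> a1 = a2.
Proof.
move=> a1P a2P.
have v1 := alpha_variational a1P (proj1 a2P).
have v2 := alpha_variational a2P (proj1 a1P).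
have E : inner (vsub a2 a1) (vsub a2 a1) =
         inner (vsub c a1) (vsub a2 a1) + inner (vsub c a2) (vsub a1 a2).
  by rewrite !inner_subl !inner_subr (inner_sym a1 a2); ring.
have d0 : inner (vsub a2 a1) (vsub a2 a1) = 0 by have := inner_ge0 (vsub a2 a1); lra.
apply: functional_extensionality => i.
by have := f_equal (fun f => f i) (inner_eq0 d0); rewrite /vsub /vzero; lra.
Qed.

Definition half_residual x := inner (vsub c (alpha2X nX c x)) (vsub c (alpha2X nX c x)) / 2.

Lemma hYX_sandwich lo hi : 0 <= lo -> sandwich (hYX nX c) half_residual lo hi.
Proof.
move=> lo0 x x' lox xx' _.
have aP : is_alpha nX c x (alpha2X nX c x) by apply: alpha2XP; lra.
have a'P : is_alpha nX c x' (alpha2X nX c x') by apply: alpha2XP; lra.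
have := alpha_inner (Rle_trans _ _ _ lo0 lox) aP.
have := alpha_inner (Rle_trans _ _ _ lo0 (Rle_trans _ _ _ lox xx')) a'P.
have := inner_le_ball_dual (vsub c (alpha2X nX c x)) (proj1 a'P).
have := inner_le_ball_dual (vsub c (alpha2X nX c x')) (proj1 aP).
have := inner_ge0 (vsub (alpha2X nX c x) (alpha2X nX c x')).
rewrite /hYX /half_residual.
move: (alpha2X nX c x) (alpha2X nX c x') => a a'.
rewrite !inner_subl !inner_subr (inner_sym a c) (inner_sym a' c) (inner_sym a' a).
lra.
Qed.

Lemma half_residual0 : half_residual 0 = inner c c / 2.
Proof.
have [a0 _] := alpha2XP (Rle_refl 0).
rewrite /half_residual.
have -> : alpha2X nX c 0 = vzero by apply: (nX_eq0 HX); have := nX_ge0 HX (alpha2X nX c 0); lra.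
by congr (inner _ _ / 2); vext.
Qed.

Lemma half_residual_nX : half_residual (nX c) = 0.
Proof.
have [_ amin] := alpha2XP (nX_ge0 HX c).
have := proj1 (norm2_le _ _) (amin c (Rle_refl _)).
have -> : vsub c c = vzero by vext.
rewrite inner0r /half_residual; have := inner_ge0 (vsub c (alpha2X nX c (nX c))); lra.
Qed.

End Alpha.
End NormedSpace.

Theorem proposition2p5 (n : nat) (nX : Vec n -> R) (HX : is_norm nX)
  (c a b : Vec n) (Hdec : is_X2_decomp nX c a b) :
  let x0 := nX a in
  let y0 := dual_norm nX b in
  (exists pr : Riemann_integrable (hYX nX c) 0 (nX c),
      RiemannInt pr = / 2 * norm2 c ^ 2) /\
  (exists pr : Riemann_integrable (hYX nX c) x0 (nX c),
      RiemannInt pr = / 2 * norm2 b ^ 2) /\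
  (exists pr : Riemann_integrable (fun x => Rmax (hYX nX c x - y0) 0) 0 (nX c),
      RiemannInt pr = / 2 * norm2 a ^ 2) /\
  x0 * y0 = inner a b.
Proof.
move: nX HX c a b Hdec; case: n => [|k] nX HX c a b Hdec x0 y0.
  rewrite /x0 /y0 (Vec0_eq0 c) (Vec0_eq0 a) (Vec0_eq0 b) (nX0 HX) norm2_vzero inner0r.
  by do ![split | exists (RiemannInt_P7 _ 0); rewrite RiemannInt_P9]; ring.
have [bca [ac aP]] := X2_decompP HX Hdec.
have x0P : 0 <= x0 := nX_ge0 HX a.
have alpha_a : alpha2X nX c x0 = a := alpha_unique HX (alpha2XP HX ord0 c x0P) aP.
have hx0 : hYX nX c x0 = y0 by rewrite /hYX alpha_a -bca.
have res_x0 : half_residual nX c x0 = inner b b / 2 by rewrite /half_residual alpha_a -bca.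
have slack : x0 * y0 = inner a b.
  by rewrite /y0 bca -(alpha_inner HX ord0 x0P aP) inner_sym.
have sw lo : 0 <= lo -> sandwich (hYX nX c) (half_residual nX c) lo (nX c).
  exact: (@hYX_sandwich _ _ HX ord0 c lo (nX c)).
have cX : 0 <= nX c := nX_ge0 HX c.
split; [|split; [|split]] => //.
- have [pr Epr] := RiemannInt_sandwich (sw 0 (Rle_refl 0)) cX.
  by exists pr; rewrite Epr (half_residual0 HX ord0) (half_residual_nX HX ord0) norm2_sq; field.
- have [pr Epr] := RiemannInt_sandwich (sw x0 x0P) ac.
  by exists pr; rewrite Epr res_x0 (half_residual_nX HX ord0) norm2_sq; field.
- have := sandwich_truncate (sw 0 (Rle_refl 0)) (conj x0P ac); rewrite hx0 => sw3.
  have [pr Epr] := RiemannInt_sandwich sw3 cX.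
  exists pr; rewrite Epr Rmin_left // Rmin_right // (half_residual0 HX ord0) res_x0 norm2_sq.
  by rewrite (proj1 Hdec) inner_addl !inner_addr (inner_sym b a) -slack; field.
Qed.
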